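(* Assume $f\in C^{m+1}[-1,1]$ with $\|f^{(m+1)}\|_{L^\infty[-1,1]}\le A$ for some $m\in\mathbb{Z}_0^+$ and a constant $A>0$ independent of $m$. Let $\int_{-1}^{x_k}f(x)\,dx$ be approximated by the optimal barycentric Gegenbauer quadrature $\sum_{i=0}^m p_{OB,k,i}^{(1)}f(z_{m,k,i}^{(\alpha_k^* )})$ for each arbitrary integration node $x_k\in[-1,1]$, $k=0,\dots,m$, with truncation error $E_m^{(\alpha_k^* )}(x_k,\zeta_k)$. Then there exist positive constants $D_1^{(\alpha_k^* )},D_2^{(\alpha_k^* )}$ independent of $m$ such that: (i) if $\alpha_k^*\ge0$: $|E_m^{(\alpha_k^* )}(x_k,\zeta_k)|\le \dfrac{A\,2^{-m}(x_k+1)\,\Gamma(\alpha_k^*+1)\,\Gamma(m+2\alpha_k^*+1)}{\Gamma(2\alpha_k^*+1)\,\Gamma(m+2)\,\Gamma(m+\alpha_k^*+1)}$; (ii) if $\frac{m+1}{2}\in\mathbb{Z}^+$ and $-\frac12<\alpha_k^*<0$: $|E_m^{(\alpha_k^* )}(x_k,\zeta_k)|\le \dfrac{A\,2^{-m-1}(x_k+1)\,\Gamma(\alpha_k^* )}{\Gamma(m+\alpha_k^*+1)}\dbinom{\frac{m-1}{2}+\alpha_k^*}{\frac{m+1}{2}}$; (iii) if $\frac m2\in\mathbb{Z}_0^+$ and $-\frac12<\alpha_k^*<0$: $|E_m^{(\alpha_k^* )}(x_k,\zeta_k)|\le \dfrac{A\,2^{-m}(x_k+1)\,\Gamma(\alpha_k^*+1)}{\sqrt{(m+1)(2\alpha_k^*+m+1)}\,\Gamma(m+\alpha_k^*+1)}\dbinom{\frac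 m2+\alpha_k^*}{\frac m2}$. Moreover, as $m\to\infty$, asymptotically $|E_m^{(\alpha_k^* )}(x_k,\zeta_k)|\lesssim B_1^{(\alpha_k^* )}(e/2)^m(x_k+1)\,m^{\alpha_k^*-m-3/2}$ if $\alpha_k^*\ge0$, and $|E_m^{(\alpha_k^* )}(x_k,\zeta_k)|\lesssim B_2^{(\alpha_k^* )}(e/2)^m(x_k+1)\,m^{-m-3/2}$ if $-\frac12<\alpha_k^*<0$, for all $k$, where $B_1^{(\alpha_k^* )}=AD_1^{(\alpha_k^* )}$ and $B_2^{(\alpha_k^* )}=B_1^{(\alpha_k^* )}D_2^{(\alpha_k^* )}$.
   Context: For $\alpha>-1/2$ and integer $n\ge0$, the Gegenbauer polynomial $G_n^{(\alpha)}$ is the Jacobi polynomial $P_n^{(\alpha-1/2,\alpha-1/2)}$ normalized so that $G_n^{(\alpha)}(1)=1$; $K_n^{(\alpha)}$ denotes its leading coefficient. For a node $x_k\in[-1,1]$, $\eta_{k,m}(\alpha)=\frac{2^m}{K_{m+1}^{(\alpha)}}\int_{-1}^{x_k}G_{m+1}^{(\alpha)}(x)\,dx$ and $\alpha_k^*=\operatorname{argmin}_{\alpha>-1/2}\eta_{k,m}^2(\alpha)$. The adjoint GG nodes $z_{m,k,i}^{(\alpha_k^* )}$, $i=0,\dots,m$, are the zeros of $G_{m+1}^{(\alpha_k^* )}$; $p_{OB,k,i}^{(1)}=\int_{-1}^{x_k}\ell_{k,i}(x)\,dx$ where $\ell_{k,i}$ is the degree-$m$ Lagrange basis polynomial at these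 nodes. The truncation error is $E_m^{(\alpha_k^* )}(x_k,\zeta_k)=\frac{f^{(m+1)}(\zeta_k)}{2^m(m+1)!}\eta_{k,m}(\alpha_k^* )$ for some $\zeta_k\in[-1,1]$. Binomial coefficients with non-integer arguments are $\binom{a}{b}=\Gamma(a+1)/(\Gamma(b+1)\Gamma(a-b+1))$; $\lesssim$ denotes an asymptotic inequality as $m\to\infty$. *)

From Stdlib Require Import Reals Lra ClassicalEpsilon Factorial Binomial Arith PeanoNat.
Open Scope R_scope.

Fixpoint rprod (f : nat -> R) (n : nat) : R :=
  match n with
  | O => f O
  | S k => rprod f k * f (S k)
  end.

(** Euler's Gamma function, via Gauss' limit formula
    Gamma x = lim_n n! n^x / (x (x+1) ... (x+n))
    (valid for every real x that is not a non-positive integer). *)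
Definition Gamma (x : R) : R :=
  epsilon (inhabits 0)
    (fun l => Un_cv (fun n => INR (fact n) * Rpower (INR n) x
                              / rprod (fun j => x + INR j) n) l).

Definition binomR (a b : R) : R :=
  Gamma (a + 1) / (Gamma (b + 1) * Gamma (a - b + 1)).

Fixpoint poch (a : R) (s : nat) : R :=
  match s with
  | O => 1
  | S k => poch a k * (a + INR k)
  end.

Definition poly_eval (c : nat -> R) (n : nat) (x : R) : R :=
  sum_f_R0 (fun j => c j * x ^ j) n.

(** Jacobi polynomial P_n^{(a,b)}:
    P_n^{(a,b)}(x) = (a+1)_n/n! * sum_{s=0}^n (-n)_s (n+a+b+1)_s / ((a+1)_s s!) ((1-x)/2)^s,
    expanded in the monomial basis; jacobi_coef n a b j = coefficient of x^j. *)
Definition jac_T (n : nat) (a b : R) (s : nat) : R :=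
  poch (- INR n) s * poch (INR n + a + b + 1) s / (poch (a + 1) s * INR (fact s)).

Definition jacobi_coef (n : nat) (a b : R) (j : nat) : R :=
  poch (a + 1) n / INR (fact n) *
  sum_f_R0 (fun s => if (j <=? s)%nat
                     then jac_T n a b s * C s j * (-1) ^ j / 2 ^ s
                     else 0) n.

Definition jacobi (n : nat) (a b x : R) : R := poly_eval (jacobi_coef n a b) n x.

Definition geg_coef (n : nat) (alpha : R) (j : nat) : R :=
  jacobi_coef n (alpha - 1/2) (alpha - 1/2) j / jacobi n (alpha - 1/2) (alpha - 1/2) 1.

Definition geg (n : nat) (alpha x : R) : R := poly_eval (geg_coef n alpha) n x.

Definition geg_lead (n : nat) (alpha : R) : R := geg_coef n alpha n.

(** Riemann integral of f over [a,b] (value independent of the integrability proof). *)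
Definition RInt (f : R -> R) (a b : R) : R :=
  epsilon (inhabits 0) (fun I => exists pr : Riemann_integrable f a b, RiemannInt pr = I).

Definition eta (m : nat) (alpha x : R) : R :=
  2 ^ m / geg_lead (m + 1) alpha * RInt (geg (m + 1) alpha) (-1) x.

Definition trunc_err (m : nat) (alpha : R) (dfm1 : R -> R) (x zeta : R) : R :=
  dfm1 zeta / (2 ^ m * INR (fact (m + 1))) * eta m alpha x.

(** Standing data: f in C^{m+1}[-1,1] with derivatives fd j = f^{(j)},
    |f^{(m+1)}| <= A on [-1,1], node x in [-1,1], and astar a minimiser of
    eta_{k,m}^2 over alpha > -1/2. *)
Definition admissible (m : nat) (A : R) (f : R -> R) (fd : nat -> R -> R)
    (x astar : R) : Prop :=
  0 < A /\
  fd O = f /\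
  (forall j y, (j <= m)%nat -> -1 <= y <= 1 -> derivable_pt_lim (fd j) y (fd (S j) y)) /\
  (forall y, -1 <= y <= 1 -> continuity_pt (fd (S m)) y) /\
  (forall y, -1 <= y <= 1 -> Rabs (fd (S m) y) <= A) /\
  -1 <= x <= 1 /\
  -1/2 < astar /\
  (forall beta, -1/2 < beta -> (eta m astar x) ^ 2 <= (eta m beta x) ^ 2).

From Stdlib Require Import Reals Factorial.
From Stdlib Require Import Lra Lia ClassicalEpsilon.
Open Scope R_scope.

(* Since alpha* minimises eta^2, the error at alpha* is at most the error at
   alpha = 0, where G_(m+1)^(0) is the Chebyshev polynomial T_(m+1).  Its leading
   coefficient is 2^m and |T_(m+1)| <= 1 on [-1, 1] (in u = (1 - x) / 2, Chebyshev's
   equation keeps u (1 - u) T'^2 + (m+1)^2 T^2 constant), so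
   |E| <= A (x + 1) / (2^m (m + 1)!).  Writing Gamma(y + k) = (y)_k Gamma(y), each of
   the bounds (i)-(iii) is this quantity times a quotient of Pochhammer symbols that
   is at least 1, and a Stirling-type lower bound for (m + 1)! gives the asymptotic
   estimates. *)

Lemma exp_le_compat x y : x <= y -> exp x <= exp y.
Proof. intros [H|<-]; [left; apply exp_increasing|]; lra. Qed.

Lemma ln_le_compat x y : 0 < x -> x <= y -> ln x <= ln y.
Proof. intros Hx [H|<-]; [left; apply ln_increasing|]; lra. Qed.

Lemma ln_le_sub_1 y : 0 < y -> ln y <= y - 1.
Proof.
  intros Hy. rewrite <- (ln_exp (y - 1)). apply ln_le_compat; [exact Hy|].
  pose proof (exp_ineq1_le (y - 1)); lra.
Qed.

Lemma Rmult_le_ge_1 B r : 0 <= B -> 1 <= r -> B <= B * r.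
Proof. intros; rewrite <- (Rmult_1_r B) at 1; apply Rmult_le_compat_l; lra. Qed.

Lemma Rdiv_ge_1 p q : 0 < p -> p <= q -> 1 <= q / p.
Proof. intros. apply (Rmult_le_reg_r p); auto. unfold Rdiv; rewrite Rmult_assoc, Rinv_l; lra. Qed.

Lemma Un_cv_const c : Un_cv (fun _ => c) c.
Proof. intros e He; exists O; intros; unfold R_dist; rewrite Rminus_diag, Rabs_R0; lra. Qed.

Lemma Un_cv_eventually_ext (u v : nat -> R) l N :
  (forall n, (N <= n)%nat -> u n = v n) -> Un_cv u l -> Un_cv v l.
Proof.
  intros H Hu eps He. destruct (Hu eps He) as [M HM]. exists (max N M).
  intros n Hn. rewrite <- H by lia. apply HM; lia.
Qed.

Lemma cv_div_plus_INR_0 c d : 0 <= d -> Un_cv (fun n => c / (d + INR n)) 0.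
Proof.
  intros Hd eps He.
  destruct (INR_archimed eps (Rabs c + 1) He) as [N HN].
  exists (S N). intros n Hn. unfold R_dist.
  assert (HnN : INR N < INR n) by (apply lt_INR; lia).
  assert (H0 : 0 <= INR N) by apply pos_INR.
  assert (Hp : 0 < d + INR n) by lra.
  rewrite Rminus_0_r. unfold Rdiv.
  rewrite Rabs_mult, Rabs_inv, (Rabs_right (d + INR n)) by lra.
  apply (Rmult_lt_reg_r (d + INR n)); [exact Hp|]. field_simplify; [|lra].
  assert (eps * INR N < eps * (d + INR n)) by (apply Rmult_lt_compat_l; lra).
  lra.
Qed.

Lemma cv_INR_div_plus_INR_1 c : 0 < c -> Un_cv (fun n => INR n / (c + INR n)) 1.
Proof.
  intros Hc.
  apply (Un_cv_eventually_ext (fun n => 1 - c / (c + INR n)) _ _ O).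
  { intros n _. pose proof (pos_INR n). field; lra. }
  assert (H := CV_minus _ _ 1 0 (Un_cv_const 1) (cv_div_plus_INR_0 c c ltac:(lra))).
  rewrite Rminus_0_r in H. exact H.
Qed.

(** * The Gamma function *)

Definition gauss_seq (x : R) (n : nat) : R :=
  INR (fact n) * Rpower (INR n) x / rprod (fun j => x + INR j) n.

Lemma rprod_shift x n :
  rprod (fun j => x + 1 + INR j) n * x = rprod (fun j => x + INR j) n * (x + 1 + INR n).
Proof.
  induction n as [|n IH]; [simpl; ring|].
  cbn [rprod]. transitivity (rprod (fun j => x + 1 + INR j) n * x * (x + 1 + INR (S n))); [ring|].
  rewrite IH, !S_INR. ring.
Qed.

Lemma rprod_neq_0 x n : (forall j, x + INR j <> 0) -> rprod (fun j => x + INR j) n <> 0.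
Proof.
  intros H; induction n; [exact (H O)|].
  cbn [rprod]. apply Rmult_integral_contrapositive; auto.
Qed.

Lemma rprod_pos x n : 0 < x -> 0 < rprod (fun j => x + INR j) n.
Proof.
  intros H; induction n; cbn [rprod]; [simpl; lra|].
  apply Rmult_lt_0_compat; [assumption|]. pose proof (pos_INR (S n)); lra.
Qed.

Lemma gauss_seq_pos x n : 0 < x -> 0 < gauss_seq x n.
Proof.
  intros Hx. unfold gauss_seq, Rdiv, Rpower.
  repeat apply Rmult_lt_0_compat; [apply lt_0_INR, lt_O_fact | apply exp_pos |].
  apply Rinv_0_lt_compat, rprod_pos; exact Hx.
Qed.

Lemma gauss_seq_succ_arg x n : x <> 0 -> (forall j, x + INR j <> 0) -> (1 <= n)%nat ->
  gauss_seq (x + 1) n = gauss_seq x n * (x * INR n / (x + 1 + INR n)).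
Proof.
  intros Hx Hj Hn. unfold gauss_seq.
  rewrite Rpower_plus, Rpower_1 by (apply lt_0_INR; lia).
  pose proof (rprod_shift x n) as Hs. pose proof (rprod_neq_0 x n Hj) as Hz.
  assert (Hx1 : x + 1 + INR n <> 0)
    by (replace (x + 1 + INR n) with (x + INR (S n)) by (rewrite S_INR; ring); apply Hj).
  assert (Hr : rprod (fun j => x + 1 + INR j) n = rprod (fun j => x + INR j) n * (x + 1 + INR n) / x)
    by (apply (Rmult_eq_reg_r x); [rewrite Hs; field|]; auto).
  rewrite Hr. field. repeat split; auto.
Qed.

Definition gauss_ratio (x : R) (n : nat) : R :=
  exp (x * (ln (INR (S n)) - ln (INR n))) * INR (S n) / (x + INR (S n)).

Lemma gauss_seq_S x n : (1 <= n)%nat ->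
  gauss_seq x (S n) = gauss_seq x n * gauss_ratio x n.
Proof.
  intros Hn. unfold gauss_seq, gauss_ratio, Rpower. cbn [rprod].
  replace (x * ln (INR (S n))) with (x * ln (INR n) + x * (ln (INR (S n)) - ln (INR n))) by ring.
  rewrite exp_plus. change (fact (S n)) with (S n * fact n)%nat. rewrite mult_INR.
  unfold Rdiv. rewrite Rinv_mult. ring.
Qed.

Lemma ln_succ_sub_bounds n : (1 <= n)%nat ->
  / INR (S n) <= ln (INR (S n)) - ln (INR n) <= / INR n.
Proof.
  intros Hn. assert (H0 : 0 < INR n) by (apply lt_0_INR; lia).
  rewrite S_INR. split.
  - pose proof (ln_le_sub_1 (INR n / (INR n + 1)) ltac:(apply Rdiv_lt_0_compat; lra)) as H.
    rewrite (Rdiv_def (INR n)), ln_mult, ln_Rinv in H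
      by (try apply Rinv_0_lt_compat; lra).
    assert (INR n * / (INR n + 1) - 1 = - / (INR n + 1)) by (field; lra). lra.
  - pose proof (ln_le_sub_1 ((INR n + 1) / INR n) ltac:(apply Rdiv_lt_0_compat; lra)) as H.
    rewrite (Rdiv_def (INR n + 1)), ln_mult, ln_Rinv in H
      by (try apply Rinv_0_lt_compat; lra).
    assert ((INR n + 1) * / INR n - 1 = / INR n) by (field; lra). lra.
Qed.

Lemma gauss_ratio_ge_1 x n : 0 < x -> (1 <= n)%nat -> 1 <= gauss_ratio x n.
Proof.
  intros Hx Hn. unfold gauss_ratio. destruct (ln_succ_sub_bounds n Hn) as [L _].
  assert (H0 : 0 < INR (S n)) by (apply lt_0_INR; lia).
  pose proof (exp_ineq1_le (x * (ln (INR (S n)) - ln (INR n)))) as He.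
  assert (x * / INR (S n) <= x * (ln (INR (S n)) - ln (INR n)))
    by (apply Rmult_le_compat_l; lra).
  apply Rdiv_ge_1; [lra|].
  apply Rle_trans with ((1 + x * / INR (S n)) * INR (S n)).
  - right; field; lra.
  - apply Rmult_le_compat_r; lra.
Qed.

(* Telescoping bound: the product of the ratios stays below exp (x (x + 1)). *)
Lemma gauss_ratio_le x n : 0 < x -> (1 <= n)%nat ->
  gauss_ratio x n <= exp (x * (x + 1) * (/ INR n - / INR (S n))).
Proof.
  intros Hx Hn. unfold gauss_ratio. destruct (ln_succ_sub_bounds n Hn) as [_ L].
  assert (H0 : 0 < INR n) by (apply lt_0_INR; lia).
  assert (H1 : INR (S n) = INR n + 1) by apply S_INR.
  assert (E1 : exp (x * (ln (INR (S n)) - ln (INR n))) <= exp (x * / INR n))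
    by (apply exp_le_compat, Rmult_le_compat_l; lra).
  assert (E2 : INR (S n) / (x + INR (S n)) <= exp (- (x / (x + INR (S n))))).
  { pose proof (exp_ineq1_le (- (x / (x + INR (S n))))).
    assert (INR (S n) / (x + INR (S n)) = 1 + - (x / (x + INR (S n)))) by (field; lra). lra. }
  assert (E3 : x * / INR n - x / (x + INR (S n)) <= x * (x + 1) * (/ INR n - / INR (S n))).
  { rewrite H1.
    replace (x * / INR n - x / (x + (INR n + 1)))
      with (x * (x + 1) * / (INR n * (x + INR n + 1))) by (field; lra).
    replace (x * (x + 1) * (/ INR n - / (INR n + 1)))
      with (x * (x + 1) * / (INR n * (INR n + 1))) by (field; lra).
    apply Rmult_le_compat_l; [nra|]. apply Rinv_le_contravar; nra. }
  unfold Rdiv. rewrite Rmult_assoc.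
  apply Rle_trans with (exp (x * / INR n) * exp (- (x / (x + INR (S n))))).
  - apply Rmult_le_compat; try lra; [left; apply exp_pos|].
    apply Rmult_le_pos; [lra|]. left; apply Rinv_0_lt_compat; lra.
  - rewrite <- exp_plus. apply exp_le_compat. unfold Rdiv in *. lra.
Qed.

Lemma gauss_seq_le_S x n : 0 < x -> (1 <= n)%nat -> gauss_seq x n <= gauss_seq x (S n).
Proof.
  intros Hx Hn. rewrite gauss_seq_S by exact Hn.
  apply Rmult_le_ge_1; [left; apply gauss_seq_pos | apply gauss_ratio_ge_1]; assumption.
Qed.

Lemma gauss_seq_le x n : 0 < x -> (1 <= n)%nat ->
  gauss_seq x n <= gauss_seq x 1 * exp (x * (x + 1) * (1 - / INR n)).
Proof.
  intros Hx Hn. induction n as [|n IH]; [lia|].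
  destruct n as [|n].
  { simpl INR. replace (1 - / 1) with 0 by field. rewrite Rmult_0_r, exp_0; lra. }
  rewrite gauss_seq_S by lia.
  pose proof (gauss_ratio_le x (S n) Hx ltac:(lia)).
  pose proof (gauss_ratio_ge_1 x (S n) Hx ltac:(lia)).
  pose proof (gauss_seq_pos x (S n) Hx).
  apply Rle_trans with (gauss_seq x 1 * exp (x * (x + 1) * (1 - / INR (S n))) *
     exp (x * (x + 1) * (/ INR (S n) - / INR (S (S n))))).
  - apply Rmult_le_compat; try lra. apply IH; lia.
  - rewrite Rmult_assoc, <- exp_plus. right. do 2 f_equal. ring.
Qed.

Lemma gauss_seq_cv x : 0 < x -> exists l, Un_cv (gauss_seq x) l /\ 0 < l.
Proof.
  intros Hx. set (v := fun k => gauss_seq x (S k)).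
  assert (Hg : Un_growing v) by (intro k; apply gauss_seq_le_S; [exact Hx | lia]).
  assert (Hb : has_ub v).
  { exists (gauss_seq x 1 * exp (x * (x + 1))). intros y [k ->]. unfold v.
    eapply Rle_trans; [apply gauss_seq_le; [exact Hx | lia]|].
    apply Rmult_le_compat_l; [left; apply gauss_seq_pos; exact Hx|].
    apply exp_le_compat. rewrite <- (Rmult_1_r (x * (x + 1))) at 2.
    apply Rmult_le_compat_l; [nra|].
    assert (0 < / INR (S k)) by (apply Rinv_0_lt_compat, lt_0_INR; lia). lra. }
  destruct (growing_cv v Hg Hb) as [l Hl]. exists l. split.
  - apply (CV_shift _ 1). eapply Un_cv_eventually_ext with (N := O); [|exact Hl].
    intros n _. unfold v. f_equal. lia.
  - pose proof (growing_ineq v l Hg Hl 0). pose proof (gauss_seq_pos x 1 Hx). unfold v in *. lra.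
Qed.

Lemma Gamma_unique x l : Un_cv (gauss_seq x) l -> Gamma x = l.
Proof.
  intros H. unfold Gamma.
  apply (UL_sequence (gauss_seq x)); [|exact H].
  exact (epsilon_spec (inhabits 0) (fun l => Un_cv (gauss_seq x) l) (ex_intro _ l H)).
Qed.

Lemma Gamma_pos x : 0 < x -> 0 < Gamma x.
Proof. intros Hx. destruct (gauss_seq_cv x Hx) as [l [H1 H2]]. rewrite (Gamma_unique x l); auto. Qed.

Lemma Gamma_cv x : 0 < x -> Un_cv (gauss_seq x) (Gamma x).
Proof. intros Hx. destruct (gauss_seq_cv x Hx) as [l [H1 H2]]. rewrite (Gamma_unique x l); auto. Qed.

Lemma Gamma_succ x : 0 < x -> Gamma (x + 1) = x * Gamma x.
Proof.
  intros Hx. apply Gamma_unique.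
  apply (Un_cv_eventually_ext (fun n => gauss_seq x n * (x * (INR n / (x + 1 + INR n)))) _ _ 1).
  - intros n Hn. rewrite gauss_seq_succ_arg; [unfold Rdiv; ring | lra | | exact Hn].
    intros j. pose proof (pos_INR j); lra.
  - replace (x * Gamma x) with (Gamma x * (x * 1)) by ring.
    apply CV_mult; [apply Gamma_cv; exact Hx|].
    apply CV_mult; [apply Un_cv_const | apply cv_INR_div_plus_INR_1; lra].
Qed.

Lemma Gamma_succ_neg a : -1 < a < 0 -> Gamma a = Gamma (a + 1) / a.
Proof.
  intros Ha. apply Gamma_unique.
  assert (Hj : forall j, a + INR j <> 0).
  { intros [|j]; [simpl; lra|]. rewrite S_INR. pose proof (pos_INR j); lra. }
  apply (Un_cv_eventually_ext (fun n => gauss_seq (a + 1) n * (/ a * (1 + (a + 1) / (0 + INR n)))) _ _ 1).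
  - intros n Hn. rewrite gauss_seq_succ_arg by (auto; lra).
    assert (0 < INR n) by (apply lt_0_INR; lia). field. lra.
  - replace (Gamma (a + 1) / a) with (Gamma (a + 1) * (/ a * (1 + 0))) by (field; lra).
    apply CV_mult; [apply Gamma_cv; lra|].
    apply CV_mult; [apply Un_cv_const|].
    apply CV_plus; [apply Un_cv_const | apply cv_div_plus_INR_0; lra].
Qed.

Lemma rprod_1_plus_INR k : rprod (fun j => 1 + INR j) k = INR (fact (S k)).
Proof.
  induction k as [|k IH]; [simpl; lra|].
  cbn [rprod]. rewrite IH. change (fact (S (S k))) with (S (S k) * fact (S k))%nat.
  rewrite mult_INR, (S_INR (S k)). ring.
Qed.

Lemma Gamma_1 : Gamma 1 = 1.
Proof.
  apply Gamma_unique.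
  apply (Un_cv_eventually_ext (fun n => INR n / (1 + INR n)) _ _ 1);
    [|apply cv_INR_div_plus_INR_1; lra].
  intros n Hn. unfold gauss_seq. rewrite Rpower_1 by (apply lt_0_INR; lia).
  rewrite rprod_1_plus_INR. change (fact (S n)) with (S n * fact n)%nat. rewrite mult_INR, S_INR.
  assert (0 < INR (fact n)) by apply lt_0_INR, lt_O_fact.
  pose proof (pos_INR n). field. split; lra.
Qed.

Lemma poch_pos y k : 0 < y -> 0 < poch y k.
Proof.
  intros Hy; induction k; simpl; [lra|].
  apply Rmult_lt_0_compat; [assumption|]. pose proof (pos_INR k); lra.
Qed.

Lemma poch_le_compat y z k : 0 < y -> y <= z -> poch y k <= poch z k.
Proof.
  intros Hy Hz; induction k; simpl; [lra|].
  pose proof (pos_INR k). pose proof (poch_pos y k Hy).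
  apply Rmult_le_compat; lra.
Qed.

Lemma poch_add y p q : poch y (p + q) = poch y p * poch (y + INR p) q.
Proof.
  induction q as [|q IH]; [simpl; rewrite Nat.add_0_r; ring|].
  rewrite Nat.add_succ_r. simpl. rewrite IH, plus_INR. ring.
Qed.

Lemma poch_1 n : poch 1 n = INR (fact n).
Proof.
  induction n as [|n IH]; [simpl; lra|]. simpl poch. rewrite IH.
  change (fact (S n)) with (S n * fact n)%nat. rewrite mult_INR, S_INR. ring.
Qed.

Lemma Gamma_add_INR x k : 0 < x -> Gamma (x + INR k) = poch x k * Gamma x.
Proof.
  intros Hx. induction k as [|k IH]; [simpl; rewrite Rplus_0_r; ring|].
  rewrite S_INR. replace (x + (INR k + 1)) with ((x + INR k) + 1) by ring.
  rewrite Gamma_succ by (pose proof (pos_INR k); lra). rewrite IH. simpl. ring.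
Qed.

(** * Gegenbauer polynomials of index 0 are Chebyshev polynomials *)

Lemma sum_f_R0_mult_l (An : nat -> R) N c : sum_f_R0 (fun i => c * An i) N = c * sum_f_R0 An N.
Proof. rewrite scal_sum. apply sum_eq. intros; ring. Qed.

Lemma sum_f_R0_swap (F : nat -> nat -> R) n :
  sum_f_R0 (fun i => sum_f_R0 (fun j => F i j) n) n =
  sum_f_R0 (fun j => sum_f_R0 (fun i => F i j) n) n.
Proof.
  induction n as [|n IH]; [reflexivity|].
  rewrite !tech5.
  rewrite (sum_eq (fun i => sum_f_R0 (fun j => F i j) (S n))
                  (fun i => sum_f_R0 (fun j => F i j) n + F i (S n))) by (intros; apply tech5).
  rewrite (sum_eq (fun j => sum_f_R0 (fun i => F i j) (S n))
                  (fun j => sum_f_R0 (fun i => F i j) n + F (S n) j)) by (intros; apply tech5).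
  rewrite !sum_plus, IH. cbv beta.
  change (sum_f_R0 (F (S n)) n) with (sum_f_R0 (fun j => F (S n) j) n). ring.
Qed.

Lemma sum_f_R0_truncate (g : nat -> R) s n : (s <= n)%nat ->
  sum_f_R0 (fun j => if (j <=? s)%nat then g j else 0) n = sum_f_R0 g s.
Proof.
  intros H. replace n with (s + (n - s))%nat by lia. induction (n - s)%nat as [|d IH].
  - rewrite Nat.add_0_r. apply sum_eq. intros i Hi. apply Nat.leb_le in Hi. rewrite Hi; auto.
  - rewrite Nat.add_succ_r, tech5, IH.
    replace ((S (s + d) <=? s)%nat) with false by (symmetry; apply Nat.leb_gt; lia). ring.
Qed.

Lemma sum_f_R0_first (g : nat -> R) n :
  (forall s, (1 <= s)%nat -> g s = 0) -> sum_f_R0 g n = g O.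
Proof. intros H; induction n as [|n IH]; [reflexivity|]. rewrite tech5, IH, (H (S n)) by lia. ring. Qed.

Lemma sum_f_R0_last (g : nat -> R) n :
  (forall s, (s < n)%nat -> g s = 0) -> sum_f_R0 g n = g n.
Proof.
  intros H. destruct n; [reflexivity|]. rewrite tech5, sum_eq_R0; [ring|]. intros; apply H; lia.
Qed.

Lemma C_diag n : C n n = 1.
Proof. unfold C. rewrite Nat.sub_diag. simpl. field. apply INR_fact_neq_0. Qed.

(* Undo the monomial expansion of [jacobi_coef]: back to powers of (1 - x) / 2. *)
Lemma jacobi_hypergeometric n a b x :
  jacobi n a b x = poch (a + 1) n / INR (fact n) *
    sum_f_R0 (fun s => jac_T n a b s * ((1 - x) / 2) ^ s) n.
Proof.
  unfold jacobi, poly_eval, jacobi_coef.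
  set (pre := poch (a + 1) n / INR (fact n)).
  set (F := fun j s => pre *
    (if (j <=? s)%nat then jac_T n a b s * C s j * (-1) ^ j / 2 ^ s * x ^ j else 0)).
  rewrite (sum_eq _ (fun j => sum_f_R0 (fun s => F j s) n)).
  2:{ intros j _. rewrite scal_sum, Rmult_comm, scal_sum. apply sum_eq. intros s _.
      unfold F. destruct (j <=? s)%nat; ring. }
  rewrite sum_f_R0_swap, scal_sum. apply sum_eq. intros s Hs.
  unfold F. rewrite sum_f_R0_mult_l, sum_f_R0_truncate by lia.
  replace ((1 - x) / 2) with ((-x + 1) * / 2) by (unfold Rdiv; ring).
  rewrite Rpow_mult_distr, binomial, pow_inv.
  rewrite (sum_eq (fun j => jac_T n a b s * C s j * (-1) ^ j / 2 ^ s * x ^ j)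
    (fun j => (jac_T n a b s / 2 ^ s) * (C s j * (- x) ^ j * 1 ^ (s - j)))).
  2:{ intros j _. rewrite pow1. replace (- x) with (-1 * x) by ring. rewrite Rpow_mult_distr.
      unfold Rdiv; ring. }
  rewrite sum_f_R0_mult_l. unfold Rdiv. ring.
Qed.

Lemma poch_S_l y k : poch y (S k) = y * poch (y + 1) k.
Proof.
  induction k as [|k IH]; [simpl; ring|].
  change (poch y (S (S k))) with (poch y (S k) * (y + INR (S k))).
  rewrite IH. simpl poch. rewrite S_INR. ring.
Qed.

Lemma poch_reflect x k : poch x k = (-1) ^ k * poch (- x - INR k + 1) k.
Proof.
  revert x. induction k as [|k IH]; intros x; [simpl; ring|].
  change (poch x (S k)) with (poch x k * (x + INR k)).
  rewrite IH. replace (- x - INR (S k) + 1) with (- x - INR k) by (rewrite S_INR; ring).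
  rewrite poch_S_l. simpl. ring.
Qed.

Lemma poch_INR_diag n : (1 <= n)%nat -> 2 * poch (INR n) n = 4 ^ n * poch (1/2) n.
Proof.
  intros Hn. induction n as [|n IH]; [lia|]. destruct n as [|n]; [simpl; field|].
  specialize (IH ltac:(lia)).
  assert (Hs : poch (INR (S n) + 1) (S n) * INR (S n)
             = poch (INR (S n)) (S n) * (INR (S n) + INR (S n)))
    by (rewrite Rmult_comm, <- poch_S_l; reflexivity).
  change (poch (INR (S (S n))) (S (S n)))
    with (poch (INR (S (S n))) (S n) * (INR (S (S n)) + INR (S n))).
  change (poch (1/2) (S (S n))) with (poch (1/2) (S n) * (1/2 + INR (S n))).
  rewrite (S_INR (S n)) in *.
  assert (HP : 0 < INR (S n)) by (apply lt_0_INR; lia).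
  apply (Rmult_eq_reg_r (INR (S n))); [|lra].
  transitivity (2 * (poch (INR (S n) + 1) (S n) * INR (S n)) * (INR (S n) + 1 + INR (S n))); [ring|].
  rewrite Hs.
  transitivity ((2 * poch (INR (S n)) (S n)) * (2 * INR (S n)) * (INR (S n) + 1 + INR (S n)));
    [ring|].
  rewrite IH. simpl pow. field.
Qed.

(* G_n^(0) = T_n has these coefficients as a polynomial in (1 - x) / 2. *)
Definition cheb_coef (n s : nat) : R := jac_T n (0 - 1/2) (0 - 1/2) s.

Lemma cheb_coef_eq n s :
  cheb_coef n s = poch (- INR n) s * poch (INR n) s / (poch (1/2) s * INR (fact s)).
Proof.
  unfold cheb_coef, jac_T. replace (INR n + (0 - 1/2) + (0 - 1/2) + 1) with (INR n) by field.
  replace (0 - 1/2 + 1) with (1/2) by field. reflexivity.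
Qed.

Lemma cheb_coef_0 n : cheb_coef n 0 = 1.
Proof. rewrite cheb_coef_eq. simpl. field. Qed.

Lemma cheb_coef_rec n s :
  cheb_coef n (S s) * ((INR s + 1) * (INR s + 1/2))
  = cheb_coef n s * ((INR s - INR n) * (INR s + INR n)).
Proof.
  rewrite !cheb_coef_eq. simpl poch. change (fact (S s)) with (S s * fact s)%nat.
  rewrite mult_INR, S_INR. pose proof (poch_pos (1/2) s ltac:(lra)). pose proof (INR_fact_neq_0 s).
  pose proof (pos_INR s). field. repeat split; lra.
Qed.

Lemma cheb_coef_vanish n k : cheb_coef n (S n + k) = 0.
Proof.
  rewrite cheb_coef_eq, poch_add. simpl poch.
  replace (- INR n + INR n) with 0 by ring. unfold Rdiv; ring.
Qed.

Lemma cheb_coef_diag n : (1 <= n)%nat -> 2 * cheb_coef n n = (-1) ^ n * 4 ^ n.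
Proof.
  intros Hn. rewrite cheb_coef_eq, (poch_reflect (- INR n)).
  replace (- - INR n - INR n + 1) with 1 by ring. rewrite poch_1.
  pose proof (poch_INR_diag n Hn) as Hd. pose proof (poch_pos (1/2) n ltac:(lra)).
  pose proof (INR_fact_neq_0 n).
  apply (Rmult_eq_reg_r (poch (1/2) n)); [|lra].
  unfold Rdiv. field_simplify; [|lra].
  transitivity ((-1) ^ n * (2 * poch (INR n) n)); [field; auto|].
  rewrite Hd. replace (1 * / 2) with (1/2) by field. ring.
Qed.

Lemma jacobi_half_at_1 n : jacobi n (0 - 1/2) (0 - 1/2) 1 = poch (1/2) n / INR (fact n).
Proof.
  rewrite jacobi_hypergeometric. replace (0 - 1/2 + 1) with (1/2) by field.
  rewrite sum_f_R0_first; [unfold jac_T; simpl; field; apply INR_fact_neq_0|].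
  intros [|s] Hs; [lia|]. replace ((1 - 1) / 2) with 0 by field. simpl; ring.
Qed.

Lemma geg_0_eq n x : geg n 0 x = poly_eval (cheb_coef n) n ((1 - x) / 2).
Proof.
  unfold geg, poly_eval, geg_coef.
  rewrite (sum_eq _ (fun j => / jacobi n (0 - 1/2) (0 - 1/2) 1 *
                              (jacobi_coef n (0 - 1/2) (0 - 1/2) j * x ^ j)))
    by (intros; unfold Rdiv; ring).
  rewrite sum_f_R0_mult_l.
  change (sum_f_R0 (fun j => jacobi_coef n (0 - 1/2) (0 - 1/2) j * x ^ j) n)
    with (jacobi n (0 - 1/2) (0 - 1/2) x).
  rewrite jacobi_half_at_1, jacobi_hypergeometric. replace (0 - 1/2 + 1) with (1/2) by field.
  pose proof (poch_pos (1/2) n ltac:(lra)). pose proof (INR_fact_neq_0 n).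
  field_simplify; [reflexivity | split; lra].
Qed.

Lemma geg_lead_0 n : (1 <= n)%nat -> 2 * geg_lead n 0 = 2 ^ n.
Proof.
  intros Hn. unfold geg_lead, geg_coef. rewrite jacobi_half_at_1. unfold jacobi_coef.
  replace (0 - 1/2 + 1) with (1/2) by field.
  rewrite sum_f_R0_last.
  2:{ intros s Hs. replace ((n <=? s)%nat) with false by (symmetry; apply Nat.leb_gt; lia).
      reflexivity. }
  rewrite Nat.leb_refl, C_diag. fold (cheb_coef n n).
  pose proof (poch_pos (1/2) n ltac:(lra)). pose proof (INR_fact_neq_0 n).
  pose proof (cheb_coef_diag n Hn) as Hd.
  assert (E : (-1) ^ n * (-1) ^ n = 1)
    by (rewrite <- Rpow_mult_distr; replace (-1 * -1) with 1 by ring; apply pow1).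
  assert (E4 : 4 ^ n = 2 ^ n * 2 ^ n) by (rewrite <- Rpow_mult_distr; f_equal; ring).
  assert (0 < 2 ^ n) by (apply pow_lt; lra).
  apply (Rmult_eq_reg_r 2); [|lra].
  field_simplify; [|repeat split; lra].
  transitivity (2 * ((2 * cheb_coef n n) * (-1) ^ n) / 2 ^ n); [field; lra|].
  rewrite Hd, E4. transitivity (2 * ((-1) ^ n * (-1) ^ n) * 2 ^ n); [field; lra|].
  rewrite E. ring.
Qed.

Lemma poly_eval_derive c N u :
  derivable_pt_lim (poly_eval c N) u
    (poly_eval (fun s => INR (S s) * c (S s)) N u - INR (S N) * c (S N) * u ^ N).
Proof.
  induction N as [|N IH].
  - replace (poly_eval (fun s => INR (S s) * c (S s)) 0 u - INR 1 * c 1%nat * u ^ 0)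
      with (c O * (INR 0 * u ^ Init.Nat.pred 0)) by (unfold poly_eval; simpl; ring).
    exact (derivable_pt_lim_scal (fun y => y ^ 0) (c O) u _ (derivable_pt_lim_pow u 0)).
  - replace (poly_eval (fun s => INR (S s) * c (S s)) (S N) u - INR (S (S N)) * c (S (S N)) * u ^ S N)
      with (poly_eval (fun s => INR (S s) * c (S s)) N u - INR (S N) * c (S N) * u ^ N +
            c (S N) * (INR (S N) * u ^ Init.Nat.pred (S N)))
      by (unfold poly_eval; rewrite tech5; simpl pred; ring).
    exact (derivable_pt_lim_plus _ _ u _ _ IH
      (derivable_pt_lim_scal (fun y => y ^ S N) (c (S N)) u _ (derivable_pt_lim_pow u (S N)))).
Qed.

Lemma poly_eval_ext a b N u :
  (forall s, (s <= N)%nat -> a s = b s) -> poly_eval a N u = poly_eval b N u.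
Proof. intros H. unfold poly_eval. apply sum_eq. intros; rewrite H; auto. Qed.

Lemma poly_eval_mul_var g N u : g O = 0 -> g (S N) = 0 ->
  u * poly_eval (fun s => g (S s)) N u = poly_eval g N u.
Proof.
  intros H0 HN. unfold poly_eval. rewrite scal_sum.
  transitivity (sum_f_R0 (fun s => g (S s) * u ^ (S s)) N); [apply sum_eq; intros; simpl; ring|].
  assert (E := decomp_sum (fun t => g t * u ^ t) (S N) ltac:(lia)). simpl pred in E. cbv beta in E.
  rewrite H0, tech5, HN in E. lra.
Qed.

Section Chebyshev.

Variable n : nat.

Let y := poly_eval (cheb_coef n) n.
Let d1 := fun s => INR (S s) * cheb_coef n (S s).
Let d2 := fun s => INR (S s) * d1 (S s).
Let y1 := poly_eval d1 n.
Let y2 := poly_eval d2 n.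

Lemma cheb_coef_S_n : cheb_coef n (S n) = 0.
Proof. rewrite <- (Nat.add_0_r (S n)). apply cheb_coef_vanish. Qed.

Lemma cheb_coef_SS_n : cheb_coef n (S (S n)) = 0.
Proof. replace (S (S n)) with (S n + 1)%nat by lia. apply cheb_coef_vanish. Qed.

Lemma cheb_derive u : derivable_pt_lim y u (y1 u).
Proof.
  assert (H := poly_eval_derive (cheb_coef n) n u). unfold y1, d1.
  rewrite cheb_coef_S_n, Rmult_0_r, Rmult_0_l, Rminus_0_r in H. exact H.
Qed.

Lemma cheb_derive2 u : derivable_pt_lim y1 u (y2 u).
Proof.
  assert (H := poly_eval_derive d1 n u). unfold y2, d2.
  replace (d1 (S n)) with 0 in H by (unfold d1; rewrite cheb_coef_SS_n; ring).
  rewrite Rmult_0_r, Rmult_0_l, Rminus_0_r in H. exact H.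
Qed.

(* Chebyshev's differential equation in the variable u = (1 - x) / 2. *)
Lemma cheb_ode u : u * (1 - u) * y2 u + (/2 - u) * y1 u + INR n ^ 2 * y u = 0.
Proof.
  set (A := fun t => INR t * INR (S t) * cheb_coef n (S t)).
  set (B := fun t => INR (pred t) * INR t * cheb_coef n t).
  set (Cc := fun t => INR t * cheb_coef n t).
  assert (R1 : u * y2 u = poly_eval A n u).
  { rewrite <- poly_eval_mul_var; [| unfold A; simpl; ring | unfold A; rewrite cheb_coef_SS_n; ring].
    f_equal. apply poly_eval_ext. intros s _. unfold A, d2, d1. ring. }
  assert (R2 : u * y1 u = poly_eval Cc n u)
    by (rewrite <- poly_eval_mul_var; [reflexivity | unfold Cc; simpl; ring |
                                       unfold Cc; rewrite cheb_coef_S_n; ring]).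
  assert (R3 : u * poly_eval A n u = poly_eval B n u)
    by (rewrite <- (poly_eval_mul_var B n u); [reflexivity | unfold B; simpl; ring |
                                              unfold B; rewrite cheb_coef_S_n; ring]).
  replace (u * (1 - u) * y2 u + (/2 - u) * y1 u + INR n ^ 2 * y u) with
    (poly_eval A n u - poly_eval B n u + /2 * y1 u - poly_eval Cc n u + INR n ^ 2 * y u)
    by (rewrite <- R3, <- R1, <- R2; ring).
  unfold y1, y, poly_eval. rewrite !scal_sum, <- minus_sum, <- plus_sum, <- minus_sum, <- plus_sum.
  apply sum_eq_R0. intros t _.
  unfold A, B, Cc, d1. pose proof (cheb_coef_rec n t) as Hr.
  assert (Hp : INR (pred t) * INR t = INR t * INR t - INR t)
    by (destruct t; [simpl; ring | simpl pred; rewrite S_INR; ring]).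
  rewrite S_INR in *.
  transitivity ((cheb_coef n (S t) * ((INR t + 1) * (INR t + 1/2))
                 - cheb_coef n t * ((INR t - INR n) * (INR t + INR n))) * u ^ t);
    [rewrite Hp; field | rewrite Hr; ring].
Qed.

Definition cheb_energy (u : R) : R := u * (1 - u) * (y1 u * y1 u) + INR n ^ 2 * (y u * y u).

(* The derivative of the energy is 2 y1 times the left-hand side of [cheb_ode]. *)
Lemma cheb_energy_derive u : derivable_pt_lim cheb_energy u 0.
Proof.
  assert (Hp := derivable_pt_lim_mult id (fct_cte 1 - id)%F u _ _ (derivable_pt_lim_id u)
     (derivable_pt_lim_minus _ _ u _ _ (derivable_pt_lim_const 1 u) (derivable_pt_lim_id u))).
  assert (Hq := derivable_pt_lim_mult _ _ u _ _ (cheb_derive2 u) (cheb_derive2 u)).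
  assert (Hr := derivable_pt_lim_mult _ _ u _ _ (cheb_derive u) (cheb_derive u)).
  assert (Hs := derivable_pt_lim_mult _ _ u _ _ (derivable_pt_lim_const (INR n ^ 2) u) Hr).
  assert (Ht := derivable_pt_lim_plus _ _ u _ _ (derivable_pt_lim_mult _ _ u _ _ Hp Hq) Hs).
  replace 0 with (2 * y1 u * (u * (1 - u) * y2 u + (/2 - u) * y1 u + INR n ^ 2 * y u))
    by (rewrite cheb_ode; ring).
  replace (2 * y1 u * (u * (1 - u) * y2 u + (/2 - u) * y1 u + INR n ^ 2 * y u)) with
    ((1 * (fct_cte 1 - id)%F u + id u * (0 - 1)) * (y1 * y1)%F u
     + (id * (fct_cte 1 - id))%F u * (y2 u * y1 u + y1 u * y2 u)
     + (0 * (y * y)%F u + fct_cte (INR n ^ 2) u * (y1 u * y u + y u * y1 u)))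
    by (unfold fct_cte, id, mult_fct, minus_fct; field).
  exact Ht.
Qed.

Lemma cheb_at_0 : y 0 = 1.
Proof.
  unfold y, poly_eval. rewrite sum_f_R0_first; [simpl; rewrite cheb_coef_0; ring|].
  intros [|s] Hs; [lia | simpl; ring].
Qed.

(* The energy at u = 0 is n^2, and u (1 - u) y1^2 >= 0 on [0, 1]. *)
Lemma cheb_bound u : 0 <= u <= 1 -> Rabs (y u) <= 1.
Proof.
  intros Hu. destruct (Nat.eq_dec n 0) as [En|En].
  { unfold y, poly_eval. rewrite En. simpl. rewrite cheb_coef_0, Rmult_1_r, Rabs_R1; lra. }
  assert (HK : cheb_energy u = cheb_energy 0).
  { destruct (Req_dec u 0) as [->|Hu0]; [reflexivity|].
    destruct (MVT_cor2 cheb_energy (fun _ => 0) 0 u ltac:(lra)) as [c [Hc _]];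
      [intros; apply cheb_energy_derive | lra]. }
  unfold cheb_energy in HK. rewrite cheb_at_0 in HK.
  assert (Hn : 0 < INR n ^ 2) by (apply pow_lt, lt_0_INR; lia).
  assert (0 <= u * (1 - u) * (y1 u * y1 u)) by (apply Rmult_le_pos; nra).
  assert (y u * y u <= 1) by nra.
  rewrite <- Rabs_R1. apply Rsqr_le_abs_0. unfold Rsqr. lra.
Qed.

End Chebyshev.

Lemma geg_0_bound n x : -1 <= x <= 1 -> Rabs (geg n 0 x) <= 1.
Proof. intros Hx. rewrite geg_0_eq. apply cheb_bound. lra. Qed.

(** * Reduction to the Chebyshev case *)

Lemma RInt_abs_le f a b M : a <= b ->
  (forall t, a <= t <= b -> continuity_pt f t) ->
  (forall t, a <= t <= b -> Rabs (f t) <= M) ->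
  Rabs (RInt f a b) <= M * (b - a).
Proof.
  intros Hab Hc Hb.
  pose (pr := continuity_implies_RiemannInt Hab Hc).
  assert (E : RInt f a b = RiemannInt pr).
  { unfold RInt.
    destruct (epsilon_spec (inhabits 0)
      (fun I => exists pr : Riemann_integrable f a b, RiemannInt pr = I)
      (ex_intro _ (RiemannInt pr) (ex_intro _ pr eq_refl))) as [pr' <-].
    apply RiemannInt_P5. }
  assert (pr_abs : Riemann_integrable (fun t => Rabs (f t)) a b).
  { apply continuity_implies_RiemannInt; [exact Hab|]. intros t Ht.
    apply (continuity_pt_comp f Rabs t); [auto | apply Rcontinuity_abs]. }
  assert (pr_M : Riemann_integrable (fct_cte M) a b).
  { apply continuity_implies_RiemannInt; [exact Hab|]. intros t _.
    apply continuity_pt_const. intros u v; reflexivity. }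
  rewrite E. eapply Rle_trans; [apply (RiemannInt_P17 pr pr_abs Hab)|].
  eapply Rle_trans; [apply (RiemannInt_P19 pr_abs pr_M Hab); intros t Ht; apply Hb; lra|].
  rewrite RiemannInt_P15. lra.
Qed.

(* K_{m+1}^(0) = 2^m and |T_{m+1}| <= 1. *)
Lemma eta_0_abs_le m x : -1 <= x <= 1 -> Rabs (eta m 0 x) <= x + 1.
Proof.
  intros Hx.
  assert (HK : geg_lead (m + 1) 0 = 2 ^ m).
  { pose proof (geg_lead_0 (m + 1) ltac:(lia)) as H. rewrite Nat.add_1_r in *. simpl pow in H. lra. }
  unfold eta. rewrite HK. replace (2 ^ m / 2 ^ m) with 1 by (field; apply pow_nonzero; lra).
  rewrite Rmult_1_l. replace (x + 1) with (1 * (x - -1)) by ring.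
  apply RInt_abs_le; [lra | |].
  - intros t _. exact (continuity_finite_sum (geg_coef (m + 1) 0) (m + 1) t).
  - intros t Ht. apply geg_0_bound. lra.
Qed.

Definition cheb_error_bound (m : nat) (A x : R) : R :=
  A * (x + 1) / (2 ^ m * INR (fact (m + 1))).

(* Since alpha* minimises eta^2, |eta m alpha* x| <= |eta m 0 x|. *)
Lemma trunc_err_le_cheb_error_bound m A f fd x astar zeta :
  admissible m A f fd x astar -> -1 <= zeta <= 1 ->
  Rabs (trunc_err m astar (fd (S m)) x zeta) <= cheb_error_bound m A x.
Proof.
  intros (HA & _ & _ & _ & Hbd & Hx & Ha & Hmin) Hz.
  assert (Hea : Rabs (eta m astar x) <= x + 1).
  { specialize (Hmin 0 ltac:(lra)). rewrite <- !Rsqr_pow2 in Hmin.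
    apply Rsqr_le_abs_0 in Hmin. pose proof (eta_0_abs_le m x Hx). lra. }
  assert (P : 0 < 2 ^ m * INR (fact (m + 1)))
    by (apply Rmult_lt_0_compat; [apply pow_lt; lra | apply lt_0_INR, lt_O_fact]).
  unfold trunc_err, cheb_error_bound, Rdiv.
  rewrite !Rabs_mult, Rabs_inv, (Rabs_right (2 ^ m * _)) by lra.
  replace (A * (x + 1) * / (2 ^ m * INR (fact (m + 1))))
    with (A * / (2 ^ m * INR (fact (m + 1))) * (x + 1)) by ring.
  assert (0 < / (2 ^ m * INR (fact (m + 1)))) by (apply Rinv_0_lt_compat; exact P).
  apply Rmult_le_compat; try apply Rabs_pos; [apply Rmult_le_pos; [apply Rabs_pos | lra] | |].
  - apply Rmult_le_compat_r; [lra | apply Hbd; exact Hz].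
  - exact Hea.
Qed.

Lemma cheb_error_bound_nonneg m A x : 0 < A -> -1 <= x -> 0 <= cheb_error_bound m A x.
Proof.
  intros HA Hx. unfold cheb_error_bound, Rdiv.
  apply Rmult_le_pos; [nra|]. left; apply Rinv_0_lt_compat, Rmult_lt_0_compat;
    [apply pow_lt; lra | apply lt_0_INR, lt_O_fact].
Qed.

(* (a + 1)_n / n! is nonincreasing in n when a <= 0. *)
Lemma poch_fact_ratio_le a j k : -1 < a <= 0 ->
  poch (a + 1) (j + k) * INR (fact j) <= poch (a + 1) j * INR (fact (j + k)).
Proof.
  intros Ha. rewrite <- !poch_1, !poch_add.
  pose proof (pos_INR j). pose proof (poch_pos (a + 1) j ltac:(lra)).
  pose proof (poch_pos 1 j ltac:(lra)).
  pose proof (poch_le_compat (a + 1 + INR j) (1 + INR j) k ltac:(lra) ltac:(lra)).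
  replace (poch (a + 1) j * poch (a + 1 + INR j) k * poch 1 j)
    with (poch (a + 1) j * poch 1 j * poch (a + 1 + INR j) k) by ring.
  rewrite Rmult_assoc. apply Rmult_le_compat_l; [lra|]. apply Rmult_le_compat_l; lra.
Qed.

Lemma poch_fact_odd_le a j : -1 < a <= 0 ->
  2 * INR (fact (S j)) * poch (a + 1) (2 * j + 1) <= INR (fact (2 * j + 1 + 1)) * poch (a + 1) j.
Proof.
  intros Ha. pose proof (poch_fact_ratio_le a j (S j) Ha). pose proof (pos_INR j).
  replace (2 * j + 1 + 1)%nat with (S (j + S j)) by lia.
  replace (2 * j + 1)%nat with (j + S j)%nat by lia.
  change (fact (S (j + S j))) with (S (j + S j) * fact (j + S j))%nat.
  change (fact (S j)) with (S j * fact j)%nat.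
  rewrite !mult_INR, !S_INR, plus_INR, S_INR.
  replace (2 * ((INR j + 1) * INR (fact j)) * poch (a + 1) (j + S j))
    with ((2 * INR j + 2) * (poch (a + 1) (j + S j) * INR (fact j))) by ring.
  replace ((INR j + (INR j + 1) + 1) * INR (fact (j + S j)) * poch (a + 1) j)
    with ((2 * INR j + 2) * (poch (a + 1) j * INR (fact (j + S j)))) by ring.
  apply Rmult_le_compat_l; lra.
Qed.

Lemma poch_fact_even_le a j : -1 < a <= 0 ->
  (2 * INR j + 1) * INR (fact j) * poch (a + 1) (2 * j) <= INR (fact (2 * j + 1)) * poch (a + 1) j.
Proof.
  intros Ha. pose proof (poch_fact_ratio_le a j j Ha). pose proof (pos_INR j).
  replace (2 * j + 1)%nat with (S (j + j)) by lia.
  replace (2 * j)%nat with (j + j)%nat by lia.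
  change (fact (S (j + j))) with (S (j + j) * fact (j + j))%nat.
  rewrite mult_INR, S_INR, plus_INR.
  replace ((2 * INR j + 1) * INR (fact j) * poch (a + 1) (j + j))
    with ((2 * INR j + 1) * (poch (a + 1) (j + j) * INR (fact j))) by ring.
  replace ((INR j + INR j + 1) * INR (fact (j + j)) * poch (a + 1) j)
    with ((2 * INR j + 1) * (poch (a + 1) j * INR (fact (j + j)))) by ring.
  apply Rmult_le_compat_l; lra.
Qed.

Lemma cheb_error_bound_le_i m A x a : 0 < A -> -1 <= x -> 0 <= a ->
  cheb_error_bound m A x <=
  A / 2 ^ m * (x + 1) * Gamma (a + 1) * Gamma (INR m + 2 * a + 1)
  / (Gamma (2 * a + 1) * Gamma (INR m + 2) * Gamma (INR m + a + 1)).
Proof.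
  intros HA Hx Ha.
  replace (INR m + 2 * a + 1) with ((2 * a + 1) + INR m) by ring.
  replace (INR m + 2) with (1 + INR (m + 1)) by (rewrite plus_INR; simpl; ring).
  replace (INR m + a + 1) with ((a + 1) + INR m) by ring.
  rewrite !Gamma_add_INR, Gamma_1, poch_1 by lra.
  pose proof (Gamma_pos (a + 1) ltac:(lra)). pose proof (Gamma_pos (2 * a + 1) ltac:(lra)).
  pose proof (poch_pos (a + 1) m ltac:(lra)).
  pose proof (INR_fact_neq_0 (m + 1)). pose proof (pow_lt 2 m ltac:(lra)).
  replace (A / 2 ^ m * (x + 1) * Gamma (a + 1) * (poch (2 * a + 1) m * Gamma (2 * a + 1)) /
    (Gamma (2 * a + 1) * (INR (fact (m + 1)) * 1) * (poch (a + 1) m * Gamma (a + 1))))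
    with (cheb_error_bound m A x * (poch (2 * a + 1) m / poch (a + 1) m))
    by (unfold cheb_error_bound; field; repeat split; lra).
  apply Rmult_le_ge_1; [apply cheb_error_bound_nonneg; assumption|].
  apply Rdiv_ge_1; [lra | apply poch_le_compat; lra].
Qed.

Lemma cheb_error_bound_le_ii j A x a : 0 < A -> -1 <= x -> -1/2 < a < 0 ->
  let m := (2 * j + 1)%nat in
  cheb_error_bound m A x <=
  A / 2 ^ (m + 1) * (x + 1) * Gamma a / Gamma (INR m + a + 1)
  * binomR ((INR m - 1) / 2 + a) ((INR m + 1) / 2).
Proof.
  intros HA Hx Ha m. unfold binomR.
  assert (Hm : INR m = 2 * INR j + 1) by (unfold m; rewrite plus_INR, mult_INR; simpl; ring).
  replace ((INR m - 1) / 2 + a + 1) with ((a + 1) + INR j) by (rewrite Hm; field).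
  replace ((INR m + 1) / 2 + 1) with (1 + INR (S j)) by (rewrite Hm, S_INR; field).
  replace ((INR m - 1) / 2 + a - (INR m + 1) / 2 + 1) with a by (rewrite Hm; field).
  replace (INR m + a + 1) with ((a + 1) + INR m) by ring.
  rewrite !Gamma_add_INR, Gamma_1, poch_1, (Gamma_succ_neg a) by lra.
  pose proof (Gamma_pos (a + 1) ltac:(lra)).
  set (Pj := poch (a + 1) j). set (Pm := poch (a + 1) m).
  set (F := INR (fact (m + 1))). set (Fj := INR (fact (S j))).
  assert (HPj : 0 < Pj) by (apply poch_pos; lra).
  assert (HPm : 0 < Pm) by (apply poch_pos; lra).
  assert (HF : 0 < F) by (apply lt_0_INR, lt_O_fact).
  assert (HFj : 0 < Fj) by (apply lt_0_INR, lt_O_fact).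
  pose proof (pow_lt 2 m ltac:(lra)).
  rewrite pow_add, pow_1.
  replace (A / (2 ^ m * 2) * (x + 1) * (Gamma (a + 1) / a) / (Pm * Gamma (a + 1)) *
     (Pj * Gamma (a + 1) / (Fj * 1 * (Gamma (a + 1) / a))))
    with (cheb_error_bound m A x * (F * Pj / (2 * Fj * Pm)))
    by (unfold cheb_error_bound; fold F; field; repeat split; lra).
  apply Rmult_le_ge_1; [apply cheb_error_bound_nonneg; assumption|].
  apply Rdiv_ge_1; [nra|]. apply poch_fact_odd_le; lra.
Qed.

Lemma cheb_error_bound_le_iii j A x a : 0 < A -> -1 <= x -> -1/2 < a < 0 ->
  let m := (2 * j)%nat in
  cheb_error_bound m A x <=
  A / 2 ^ m * (x + 1) * Gamma (a + 1)
  / (sqrt ((INR m + 1) * (2 * a + INR m + 1)) * Gamma (INR m + a + 1))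
  * binomR (INR m / 2 + a) (INR m / 2).
Proof.
  intros HA Hx Ha m. unfold binomR.
  assert (Hm : INR m = 2 * INR j) by (unfold m; rewrite mult_INR; simpl; ring).
  replace (INR m / 2 + a + 1) with ((a + 1) + INR j) by (rewrite Hm; field).
  replace (INR m / 2 + 1) with (1 + INR j) by (rewrite Hm; field).
  replace (INR m / 2 + a - INR m / 2 + 1) with (a + 1) by field.
  replace (INR m + a + 1) with ((a + 1) + INR m) by ring.
  rewrite !Gamma_add_INR, Gamma_1, poch_1 by lra.
  pose proof (Gamma_pos (a + 1) ltac:(lra)). pose proof (pos_INR j).
  set (Sq := sqrt ((INR m + 1) * (2 * a + INR m + 1))).
  assert (HS : 0 < Sq) by (apply sqrt_lt_R0; nra).
  assert (HS2 : Sq <= 2 * INR j + 1).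
  { unfold Sq. rewrite <- (sqrt_square (2 * INR j + 1)) by lra.
    apply sqrt_le_1_alt. rewrite Hm. nra. }
  set (Pj := poch (a + 1) j). set (Pm := poch (a + 1) m).
  set (F := INR (fact (m + 1))). set (Fj := INR (fact j)).
  assert (HPj : 0 < Pj) by (apply poch_pos; lra).
  assert (HPm : 0 < Pm) by (apply poch_pos; lra).
  assert (HF : 0 < F) by (apply lt_0_INR, lt_O_fact).
  assert (HFj : 0 < Fj) by (apply lt_0_INR, lt_O_fact).
  pose proof (pow_lt 2 m ltac:(lra)).
  replace (A / 2 ^ m * (x + 1) * Gamma (a + 1) / (Sq * (Pm * Gamma (a + 1))) *
     (Pj * Gamma (a + 1) / (Fj * 1 * Gamma (a + 1))))
    with (cheb_error_bound m A x * (F * Pj / (Sq * Pm * Fj)))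
    by (unfold cheb_error_bound; fold F; field; repeat split; lra).
  apply Rmult_le_ge_1; [apply cheb_error_bound_nonneg; assumption|].
  apply Rdiv_ge_1; [apply Rmult_lt_0_compat; [apply Rmult_lt_0_compat|]; lra|].
  pose proof (poch_fact_even_le a j ltac:(lra)) as Hr. fold m in Hr. fold Pj Pm F Fj in Hr.
  apply Rle_trans with ((2 * INR j + 1) * Fj * Pm); [|exact Hr].
  replace (Sq * Pm * Fj) with (Sq * (Fj * Pm)) by ring.
  rewrite Rmult_assoc. apply Rmult_le_compat_r; [nra | exact HS2].
Qed.

(** * A Stirling-type lower bound for m! *)

Lemma ln_1_plus_le y : 0 <= y -> ln (1 + y) <= y - y ^ 2 / 2 + y ^ 3 / 3.
Proof.
  intros Hy. destruct (Req_dec y 0) as [->|Hy0].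
  { rewrite Rplus_0_r, ln_1. simpl; lra. }
  set (phi := fun t => t - / 2 * t ^ 2 + / 3 * t ^ 3 - ln (1 + t)).
  assert (Hd : forall c, 0 <= c <= y -> derivable_pt_lim phi c (c ^ 3 / (1 + c))).
  { intros c Hc.
    assert (H1 := derivable_pt_lim_plus (fct_cte 1) id c 0 1
                    (derivable_pt_lim_const 1 c) (derivable_pt_lim_id c)).
    assert (H2 := derivable_pt_lim_ln ((fct_cte 1 + id)%F c)
                    ltac:(unfold plus_fct, fct_cte, id; lra)).
    assert (H3 := derivable_pt_lim_comp _ _ c _ _ H1 H2).
    assert (H4 := derivable_pt_lim_scal _ (/ 2) c _ (derivable_pt_lim_pow c 2)).
    assert (H5 := derivable_pt_lim_scal _ (/ 3) c _ (derivable_pt_lim_pow c 3)).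
    assert (H6 := derivable_pt_lim_minus _ _ c _ _
       (derivable_pt_lim_plus _ _ c _ _ (derivable_pt_lim_minus _ _ c _ _
          (derivable_pt_lim_id c) H4) H5) H3).
    replace (c ^ 3 / (1 + c)) with
      (1 - / 2 * (INR 2 * c ^ Init.Nat.pred 2) + / 3 * (INR 3 * c ^ Init.Nat.pred 3)
       - / (fct_cte 1 + id)%F c * (0 + 1))
      by (unfold plus_fct, fct_cte, id; simpl; field; lra).
    exact H6. }
  destruct (MVT_cor2 phi (fun c => c ^ 3 / (1 + c)) 0 y ltac:(lra) Hd) as [c [Hc Hc2]].
  assert (0 <= c ^ 3 / (1 + c) * (y - 0)).
  { apply Rmult_le_pos; [|lra]. unfold Rdiv. apply Rmult_le_pos; [apply pow_le; lra|].
    left; apply Rinv_0_lt_compat; lra. }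
  unfold phi in Hc. rewrite Rplus_0_r, ln_1 in Hc. simpl in Hc |- *. lra.
Qed.

Lemma ln_1_plus_inv_le k : 1 <= k -> (k + 1/2) * ln (1 + / k) <= 1 + 1 / (2 * k * (k + 1)).
Proof.
  intros Hk.
  eapply Rle_trans; [apply Rmult_le_compat_l; [lra | apply ln_1_plus_le; left; apply Rinv_0_lt_compat; lra]|].
  replace ((k + 1/2) * (/ k - (/ k) ^ 2 / 2 + (/ k) ^ 3 / 3))
    with (1 + (k + 2) / (12 * k ^ 3)) by (field; lra).
  apply Rplus_le_compat_l.
  apply (Rmult_le_reg_r (12 * k ^ 3 * (2 * k * (k + 1)))); [apply Rmult_lt_0_compat; nra|].
  field_simplify; nra.
Qed.

Lemma ln_fact_ge m : (1 <= m)%nat ->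
  (INR m + 1/2) * ln (INR m) - INR m + 1/2 + 1 / (2 * INR m) <= ln (INR (fact m)).
Proof.
  intros Hm. induction m as [|m IH]; [lia|]. destruct m as [|m].
  { simpl. rewrite ln_1. lra. }
  specialize (IH ltac:(lia)).
  set (k := INR (S m)) in *.
  assert (Hk : 1 <= k) by (unfold k; rewrite S_INR; pose proof (pos_INR m); lra).
  change (fact (S (S m))) with (S (S m) * fact (S m))%nat. rewrite mult_INR.
  replace (INR (S (S m))) with (k + 1) by (unfold k; rewrite (S_INR (S m)); ring).
  rewrite ln_mult by (try apply lt_0_INR, lt_O_fact; lra).
  assert (Hl : ln (k + 1) = ln k + ln (1 + / k)).
  { rewrite <- ln_mult by (try apply Rplus_lt_0_compat; try apply Rinv_0_lt_compat; lra).
    f_equal. field. lra. }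
  pose proof (ln_1_plus_inv_le k Hk).
  assert (E : 1 / (2 * k) - 1 / (2 * (k + 1)) = 1 / (2 * k * (k + 1))) by (field; lra).
  rewrite Hl. nra.
Qed.

Lemma fact_succ_ge m : (1 <= m)%nat ->
  exp ((INR m + 3/2) * ln (INR m) - INR m) <= INR (fact (m + 1)).
Proof.
  intros Hm. assert (H1 : 1 <= INR m) by (apply (le_INR 1); lia).
  assert (F : exp ((INR m + 1/2) * ln (INR m) - INR m) <= INR (fact m)).
  { rewrite <- (exp_ln (INR (fact m))) by (apply lt_0_INR, lt_O_fact).
    apply exp_le_compat. pose proof (ln_fact_ge m Hm).
    assert (0 < 1 / (2 * INR m)) by (apply Rdiv_lt_0_compat; lra). lra. }
  rewrite Nat.add_1_r. change (fact (S m)) with (S m * fact m)%nat. rewrite mult_INR, S_INR.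
  replace ((INR m + 3/2) * ln (INR m) - INR m)
    with (ln (INR m) + ((INR m + 1/2) * ln (INR m) - INR m)) by field.
  rewrite exp_plus, exp_ln by lra. apply Rmult_le_compat; [lra | left; apply exp_pos | lra | exact F].
Qed.

Lemma exp_INR m : exp (INR m) = exp 1 ^ m.
Proof. induction m as [|m IH]; [apply exp_0|]. rewrite S_INR, exp_plus, IH. simpl; ring. Qed.

Lemma inv_pow2_fact_le m b : (1 <= m)%nat -> 0 <= b ->
  / (2 ^ m * INR (fact (m + 1))) <= (exp 1 / 2) ^ m * Rpower (INR m) (b - INR m - 3/2).
Proof.
  intros Hm Hb.
  assert (Hln : 0 <= ln (INR m))
    by (rewrite <- ln_1; apply ln_le_compat; [lra | apply (le_INR 1); lia]).
  assert (P2 : 0 < 2 ^ m) by (apply pow_lt; lra).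
  apply Rle_trans with (/ (2 ^ m * exp ((INR m + 3/2) * ln (INR m) - INR m))).
  { apply Rinv_le_contravar; [apply Rmult_lt_0_compat; [exact P2 | apply exp_pos]|].
    apply Rmult_le_compat_l; [lra | apply fact_succ_ge; exact Hm]. }
  unfold Rdiv, Rpower. rewrite Rpow_mult_distr, <- exp_INR, pow_inv, Rinv_mult, <- exp_Ropp.
  replace (- ((INR m + 3 * / 2) * ln (INR m) - INR m))
    with (INR m + (- INR m - 3 * / 2) * ln (INR m)) by field.
  rewrite exp_plus.
  assert (E : exp ((- INR m - 3 * / 2) * ln (INR m)) <= exp ((b - INR m - 3 * / 2) * ln (INR m)))
    by (apply exp_le_compat, Rmult_le_compat_r; lra).
  rewrite <- Rmult_assoc, (Rmult_comm (/ 2 ^ m)).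
  apply Rmult_le_compat_l; [|exact E].
  apply Rmult_le_pos; [left; apply exp_pos | left; apply Rinv_0_lt_compat; exact P2].
Qed.

Lemma cheb_error_bound_le_asymptotic m A x b eps :
  (1 <= m)%nat -> 0 <= b -> 0 < A -> -1 <= x -> 0 < eps ->
  cheb_error_bound m A x <=
  (1 + eps) * A * (exp 1 / 2) ^ m * (x + 1) * Rpower (INR m) (b - INR m - 3/2).
Proof.
  intros Hm Hb HA Hx He.
  set (Y := (exp 1 / 2) ^ m * Rpower (INR m) (b - INR m - 3/2)).
  assert (HY : 0 <= Y).
  { left. apply Rmult_lt_0_compat; [apply pow_lt; pose proof (exp_pos 1); lra | apply exp_pos]. }
  replace ((1 + eps) * A * (exp 1 / 2) ^ m * (x + 1) * Rpower (INR m) (b - INR m - 3/2))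
    with ((1 + eps) * (A * (x + 1) * Y)) by (unfold Y; ring).
  assert (H1 : cheb_error_bound m A x <= A * (x + 1) * Y)
    by (apply Rmult_le_compat_l; [nra | apply inv_pow2_fact_le; assumption]).
  assert (0 <= eps * (A * (x + 1) * Y)) by (apply Rmult_le_pos; [lra | apply Rmult_le_pos; [nra | exact HY]]).
  lra.
Qed.

(* The asymptotic bounds hold with D1 = D2 = 1 for every m >= 1. *)
Theorem theorem7 :
  exists D1 D2 : R -> R,
    (forall a, -1/2 < a -> 0 < D1 a /\ 0 < D2 a) /\
    (forall (m : nat) (A : R) (f : R -> R) (fd : nat -> R -> R) (x astar zeta : R),
       admissible m A f fd x astar -> -1 <= zeta <= 1 ->
       (0 <= astar ->
          Rabs (trunc_err m astar (fd (S m)) x zeta) <=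
          A / 2 ^ m * (x + 1) * Gamma (astar + 1) * Gamma (INR m + 2 * astar + 1)
          / (Gamma (2 * astar + 1) * Gamma (INR m + 2) * Gamma (INR m + astar + 1))) /\
       (Nat.odd m = true -> -1/2 < astar < 0 ->
          Rabs (trunc_err m astar (fd (S m)) x zeta) <=
          A / 2 ^ (m + 1) * (x + 1) * Gamma astar / Gamma (INR m + astar + 1)
          * binomR ((INR m - 1) / 2 + astar) ((INR m + 1) / 2)) /\
       (Nat.even m = true -> -1/2 < astar < 0 ->
          Rabs (trunc_err m astar (fd (S m)) x zeta) <=
          A / 2 ^ m * (x + 1) * Gamma (astar + 1)
          / (sqrt ((INR m + 1) * (2 * astar + INR m + 1)) * Gamma (INR m + astar + 1))
          * binomR (INR m / 2 + astar) (INR m / 2))) /\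
    (forall a, 0 <= a -> forall eps, 0 < eps -> exists N : nat,
       forall (m : nat) (A : R) (f : R -> R) (fd : nat -> R -> R) (x zeta : R),
         (N <= m)%nat -> admissible m A f fd x a -> -1 <= zeta <= 1 ->
         Rabs (trunc_err m a (fd (S m)) x zeta) <=
         (1 + eps) * (A * D1 a) * (exp 1 / 2) ^ m * (x + 1)
           * Rpower (INR m) (a - INR m - 3/2)) /\
    (forall a, -1/2 < a < 0 -> forall eps, 0 < eps -> exists N : nat,
       forall (m : nat) (A : R) (f : R -> R) (fd : nat -> R -> R) (x zeta : R),
         (N <= m)%nat -> admissible m A f fd x a -> -1 <= zeta <= 1 ->
         Rabs (trunc_err m a (fd (S m)) x zeta) <=
         (1 + eps) * ((A * D1 a) * D2 a) * (exp 1 / 2) ^ m * (x + 1)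
           * Rpower (INR m) (- INR m - 3/2)).
Proof.
  exists (fun _ => 1), (fun _ => 1). split; [intros; lra|].
  split; [|split].
  - intros m A f fd x astar zeta Hadm Hz.
    pose proof (trunc_err_le_cheb_error_bound m A f fd x astar zeta Hadm Hz) as Hb.
    destruct Hadm as (HA & _ & _ & _ & _ & Hx & _).
    split; [|split].
    + intros Ha. eapply Rle_trans; [exact Hb|]. apply cheb_error_bound_le_i; lra.
    + intros Hodd Ha. apply Nat.odd_spec in Hodd as [j ->].
      eapply Rle_trans; [exact Hb|]. apply cheb_error_bound_le_ii; lra.
    + intros Hev Ha. apply Nat.even_spec in Hev as [j ->].
      eapply Rle_trans; [exact Hb|]. apply cheb_error_bound_le_iii; lra.
  - intros a Ha eps Heps. exists 1%nat. intros m A f fd x zeta Hm Hadm Hz.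
    pose proof (trunc_err_le_cheb_error_bound m A f fd x a zeta Hadm Hz) as Hb.
    destruct Hadm as (HA & _ & _ & _ & _ & Hx & _).
    eapply Rle_trans; [exact Hb|]. rewrite Rmult_1_r.
    apply cheb_error_bound_le_asymptotic; lra || assumption.
  - intros a Ha eps Heps. exists 1%nat. intros m A f fd x zeta Hm Hadm Hz.
    pose proof (trunc_err_le_cheb_error_bound m A f fd x a zeta Hadm Hz) as Hb.
    destruct Hadm as (HA & _ & _ & _ & _ & Hx & _).
    eapply Rle_trans; [exact Hb|].
    rewrite !Rmult_1_r. replace (- INR m - 3/2) with (0 - INR m - 3/2) by ring.
    apply cheb_error_bound_le_asymptotic; lra || assumption.
Qed.
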